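(* Let $f\in\mathcal F$. If $g_1\in\mathcal M_f$ and $g_2\in\mathcal M_{fg_1}$, then $g:=g_1g_2\in\mathcal M_f$ and $fg\in\mathcal F$. In particular, if $g\in\mathcal M_f\cap\mathcal M_{fg}$, then $g^2\in\mathcal M_f$.
   Context: $\Lambda=[-\pi,\pi]$. For $h\ge0$, $G(h)=\exp\{\frac1{2\pi}\int_\Lambda\ln h\,d\lambda\}$ if $\ln h\in L^1(\Lambda)$, else $G(h)=0$. For a spectral density $f$ ($f\ge0$, $f\in L^1(\Lambda)$, positive on a set of positive measure), $\sigma_n^2(f)=\min_{c_1,\dots,c_n\in\mathbb C}\int_\Lambda|1-\sum_{k=1}^n c_ke^{-ik\lambda}|^2f(\lambda)\,d\lambda$, $\sigma_n(f)=\sqrt{\sigma_n^2(f)}$. $\mathcal F=\{f\in L^1(\Lambda): f\ge0,\ G(f)=0,\ \lim_{n\to\infty}\sigma_{n+1}(f)/\sigma_n(f)=1\}$. For $f\in\mathcal F$, $\mathcal M_f=\{g\ge0: G(g)>0,\ fg\in L^1(\Lambda),\ \lim_{n\to\infty}\sigma_n^2(fg)/\sigma_n^2(f)=G(g)\}$. *)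

From HB Require Import structures.
From mathcomp Require Import all_boot all_order all_algebra.
From mathcomp Require Import all_classical all_reals all_analysis.
Set Implicit Arguments. Unset Strict Implicit. Unset Printing Implicit Defensive.
Import Order.TTheory GRing.Theory Num.Theory.
Import numFieldNormedType.Exports.
Local Open Scope classical_set_scope.
Local Open Scope ring_scope.

Section Spectral.
Variable R : realType.

Definition Lam : set R := `[(- pi)%R, pi]%classic.

Notation leb := (@lebesgue_measure R).

Definition lnE (x : R) : \bar R := if (0 < x)%R then (ln x)%:E else -oo%E.

Definition log_integrable (h : R -> R) : Prop :=
  leb.-integrable Lam (fun x => lnE (h x)).

Definition Ggeo (h : R -> R) : R :=
  if `[< log_integrable h >] then
    expR ((2 * pi)^-1 * fine (\int[leb]_(x in Lam) lnE (h x)))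
  else 0.

(* |1 - sum_{k=1}^n c_k e^{-ik x}|^2 with c_k = a k + i b k *)
Definition trig_err (n : nat) (a b : nat -> R) (x : R) : R :=
  (1 - \sum_(1 <= k < n.+1) (a k * cos (k%:R * x) + b k * sin (k%:R * x))) ^+ 2
  + (\sum_(1 <= k < n.+1) (b k * cos (k%:R * x) - a k * sin (k%:R * x))) ^+ 2.

(* sigma_n^2(f) = min over c_1..c_n in C of int_Lambda |1 - sum c_k e^{-ik.}|^2 f *)
Definition sigma2 (n : nat) (f : R -> R) : R :=
  fine (ereal_inf [set (\int[leb]_(x in Lam) (trig_err n ab.1 ab.2 x * f x)%:E)%E
                  | ab in [set: (nat -> R) * (nat -> R)]]).

Definition sigma (n : nat) (f : R -> R) : R := Num.sqrt (sigma2 n f).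

Definition spectral_density (f : R -> R) : Prop :=
  [/\ (forall x, Lam x -> (0 <= f x)%R),
      leb.-integrable Lam (EFin \o f)
    & (0 < leb (Lam `&` [set x | (0 < f x)%R]))%E].

Definition classF (f : R -> R) : Prop :=
  [/\ spectral_density f, Ggeo f = 0
    & (fun n => sigma n.+1 f / sigma n f) @ \oo --> (1 : R)].

Definition classM (f g : R -> R) : Prop :=
  [/\ (forall x, Lam x -> 0 <= g x), 0 < Ggeo g,
      leb.-integrable Lam (EFin \o (f \* g))
    & (fun n => sigma2 n (f \* g) / sigma2 n f) @ \oo --> Ggeo g].

End Spectral.

From HB Require Import structures.
From mathcomp Require Import all_boot all_order all_algebra.
From mathcomp Require Import all_classical all_reals all_analysis.
From mathcomp Require Import measurable_realfun.
Import Order.TTheory GRing.Theory Num.Theory.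
Import numFieldNormedType.Exports.
Local Open Scope classical_set_scope.
Local Open Scope ring_scope.

(** [G] is multiplicative on nonnegative functions with integrable logarithm,
    and [sigma_n^2(f g1 g2) / sigma_n^2 f] is the product of
    [sigma_n^2(f g1 g2) / sigma_n^2(f g1)] and [sigma_n^2(f g1) / sigma_n^2 f];
    hence [g1 g2 \in M_f].  Given [g \in M_f], [f g \in F]: [f g] cannot
    vanish almost everywhere (every [sigma_n^2(f g)] would be 0, forcing
    [G g = 0]); [G(f g) = 0], since otherwise [ln f = ln (f g) - ln g] would be
    integrable; and [sigma_(n+1)^2(f g) / sigma_n^2(f g)] differs from
    [sigma_(n+1)^2 f / sigma_n^2 f] by the factor [r_(n+1) / r_n], where
    [r_n = sigma_n^2(f g) / sigma_n^2 f] tends to [G g > 0]. *)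

Section ratio_limits.
Context {R : realFieldType}.
Implicit Types (s t u v : nat -> R) (a b c : R).

Lemma cvg_ratio_trans {s t u a b} : a != 0 ->
  (fun n => t n / s n) @ \oo --> a -> (fun n => u n / t n) @ \oo --> b ->
  (fun n => u n / s n) @ \oo --> b * a.
Proof.
move=> a0 ts ut; apply: cvg_trans (cvgM ut ts); apply: near_eq_cvg.
near=> n; have : t n / s n != 0 by near: n; exact: cvgr_neq0 ts a0.
rewrite mulf_eq0 negb_or => /andP[t0 _].
by rewrite /= mulrA divfK.
Unshelve. all: by end_near.
Qed.

Lemma cvg_ratio_div {s u v b c} : c != 0 ->
  (fun n => u n / s n) @ \oo --> b -> (fun n => v n / s n) @ \oo --> c ->
  (fun n => u n / v n) @ \oo --> b / c.
Proof.
move=> c0 us vs; apply: cvg_trans (cvgM us (cvgV c0 vs)); apply: near_eq_cvg.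
near=> n; have : v n / s n != 0 by near: n; exact: cvgr_neq0 vs c0.
rewrite mulf_eq0 invr_eq0 negb_or => /andP[_ s0].
by rewrite /= invf_div mulrA divfK.
Unshelve. all: by end_near.
Qed.

End ratio_limits.

Section spectral.
Context {R : realType}.
Notation leb := (@lebesgue_measure R).
Notation Lam := (@Lam R).
Implicit Types (f g h : R -> R) (n : nat).

Definition nonneg_on_Lam h := forall x, Lam x -> 0 <= h x.

(* On the Lebesgue sigma-algebra of [R], the one [leb] lives on, rather than
   the default one. *)
Lemma measurable_Lam : measurable (Lam : set (measurableTypeR R)).
Proof. exact: measurable_itv. Qed.

Lemma nonneg_on_LamM {f g} :
  nonneg_on_Lam f -> nonneg_on_Lam g -> nonneg_on_Lam (f \* g).
Proof. by move=> f0 g0 x Lx; rewrite mulr_ge0 ?f0 ?g0. Qed.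

Lemma measurable_of_integrable {h} :
  leb.-integrable Lam (EFin \o h) -> measurable_fun Lam h.
Proof. by move=> /measurable_int /measurable_EFinP. Qed.

Lemma trig_err_ge0 n (a b : nat -> R) (x : R) : 0 <= trig_err n a b x.
Proof. by rewrite addr_ge0 // sqr_ge0. Qed.

Lemma measurable_trig_err n (a b : nat -> R) : measurable_fun setT (trig_err n a b).
Proof.
have mlin k : measurable_fun setT (fun x : R => k%:R * x) by exact: measurable_funM.
have mcos k : measurable_fun setT (fun x : R => cos (k%:R * x)).
  exact: measurableT_comp (continuous_measurable_fun (@continuous_cos R)) (mlin k).
have msin k : measurable_fun setT (fun x : R => sin (k%:R * x)).
  exact: measurableT_comp (continuous_measurable_fun (@continuous_sin R)) (mlin k).
apply: measurable_funD; apply: measurable_funX.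
  apply: measurable_funB => //; apply: measurable_sum => k.
  by apply: measurable_funD; apply: measurable_funM.
by apply: measurable_sum => k; apply: measurable_funB; apply: measurable_funM.
Qed.

Lemma sigma2_ge0 n h : nonneg_on_Lam h -> 0 <= sigma2 n h.
Proof.
move=> h0; apply: fine_ge0; apply: le_ereal_inf_tmp => _ [ab _ <-].
by apply: integral_ge0 => x Lx; rewrite lee_fin mulr_ge0 ?trig_err_ge0 ?h0.
Qed.

Lemma sigma2_eq0 n {h} : nonneg_on_Lam h -> measurable_fun Lam h ->
  leb (Lam `&` [set x | 0 < h x]) = 0%E -> sigma2 n h = 0.
Proof.
move=> h0 mh null.
have int0 (ab : (nat -> R) * (nat -> R)) :
    (\int[leb]_(x in Lam) (trig_err n ab.1 ab.2 x * h x)%:E = 0)%E.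
  rewrite (ae_eq_integral (cst 0%E)) ?integral0 //; first exact: measurable_Lam.
  - apply/measurable_EFinP; apply: measurable_funM => //.
    exact: measurable_funS (measurable_trig_err _ _ _).
  - exists (Lam `&` [set x | 0 < h x]); split => //.
      exact: (measurable_fun_ltr (measurable_cst (0:R)) mh) measurable_Lam [set true] I.
    move=> x /not_implyP[Lx hx]; split => //=; rewrite lt_neqAle h0 // andbT.
    by apply/eqP => hx0; apply: hx; rewrite /= -hx0 mulr0.
rewrite /sigma2 (_ : [set _ | ab in _] = [set 0%E]) ?ereal_inf1 //.
apply/seteqP; split => [_ [ab _ <-]|_ ->]; first by rewrite /= int0.
by exists ((fun=> 0), (fun=> 0)) => //; rewrite int0.
Qed.

Lemma sigma_ratio_sqrt n h : nonneg_on_Lam h ->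
  sigma n.+1 h / sigma n h = Num.sqrt (sigma2 n.+1 h / sigma2 n h).
Proof. by move=> h0; rewrite sqrtrM ?sqrtrV ?sigma2_ge0. Qed.

Lemma cvg_sigma2_ratio {h} : nonneg_on_Lam h ->
  (fun n => sigma n.+1 h / sigma n h) @ \oo --> (1 : R) ->
  (fun n => sigma2 n.+1 h / sigma2 n h) @ \oo --> (1 : R).
Proof.
move=> h0 r1; rewrite -[1 : R]mulr1.
have -> : (fun n => sigma2 n.+1 h / sigma2 n h) =
    (fun n => sigma n.+1 h / sigma n h * (sigma n.+1 h / sigma n h)).
  by apply/funext => n; rewrite mulrACA -invfM /sigma -!expr2 !sqr_sqrtr ?sigma2_ge0.
exact: cvgM.
Qed.

Lemma cvg_sigma_ratio {h} : nonneg_on_Lam h ->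
  (fun n => sigma2 n.+1 h / sigma2 n h) @ \oo --> (1 : R) ->
  (fun n => sigma n.+1 h / sigma n h) @ \oo --> (1 : R).
Proof.
move=> h0 r1; rewrite -sqrtr1 (funext (fun n => sigma_ratio_sqrt n h h0)).
exact: cvg_comp r1 (@sqrt_continuous R _).
Qed.

Lemma lnEM (x y : R) : 0 <= x -> 0 <= y -> lnE (x * y) = (lnE x + lnE y)%E.
Proof.
rewrite /lnE le_eqVlt => /predU1P[<- _|x0]; first by rewrite mul0r ltxx addNye.
rewrite le_eqVlt => /predU1P[<-|y0]; first by rewrite mulr0 ltxx addeNy.
by rewrite mulr_gt0 // x0 y0 lnM ?posrE.
Qed.

Lemma lnE_neq_pinfty (x : R) : lnE x != +oo%E.
Proof. by rewrite /lnE; case: ifP. Qed.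

Lemma measurable_lnE : measurable_fun setT (@lnE R).
Proof.
apply: measurable_fun_ifT; first exact: measurable_fun_ltr.
  by apply/measurable_EFinP; exact: measurable_ln.
exact: measurable_cst.
Qed.

Lemma Ggeo_eq0 h : Ggeo h = 0 <-> ~ log_integrable h.
Proof.
rewrite /Ggeo; case: asboolP => // hi; split=> // /eqP.
by rewrite gt_eqF ?expR_gt0.
Qed.

Lemma log_integrable_Ggeo_gt0 {h} : 0 < Ggeo h -> log_integrable h.
Proof. by rewrite /Ggeo; case: asboolP => // _; rewrite ltxx. Qed.

Lemma log_integrableM {g1 g2} : nonneg_on_Lam g1 -> nonneg_on_Lam g2 ->
  log_integrable g1 -> log_integrable g2 ->
  log_integrable (g1 \* g2) /\ Ggeo (g1 \* g2) = Ggeo g1 * Ggeo g2.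
Proof.
move=> g10 g20 i1 i2.
have lnM : {in Lam, (fun x => lnE (g1 x) + lnE (g2 x))%E =1
    (fun x => lnE ((g1 \* g2) x))}%E.
  by move=> x /set_mem Lx; rewrite /= lnEM ?g10 ?g20.
have i12 : log_integrable (g1 \* g2).
  exact: eq_integrable measurable_Lam _ _ lnM (integrableD measurable_Lam i1 i2).
split => //; rewrite /Ggeo !asboolT //.
rewrite -(eq_integral (mu:=leb) _ _ lnM) integralD //; last exact: measurable_Lam.
rewrite fineD ?integrable_fin_num //; last 2 first.
- exact: measurable_Lam.
- exact: measurable_Lam.
by rewrite mulrDr expRD.
Qed.

Lemma abse_le_abse_add (a b : \bar R) : a != +oo%E -> b != +oo%E ->
  (`|a| <= `|a + b| + `|b|)%E.
Proof.
case: a => [r| |] // _; case: b => [s| |] //= _; last by rewrite leey.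
by rewrite lee_fin -{1}(addrK s r) ler_normB.
Qed.

Lemma log_integrable_divr {f g} : nonneg_on_Lam f -> nonneg_on_Lam g ->
  measurable_fun Lam f -> log_integrable g -> log_integrable (f \* g) ->
  log_integrable f.
Proof.
move=> f0 g0 mf ig ifg.
apply: le_integrable (integrableD measurable_Lam (integrable_abse ifg)
  (integrable_abse ig)) => //; first exact: measurable_Lam.
  exact: measurableT_comp measurable_lnE mf.
move=> x Lx; rewrite (@gee0_abs _ (_ + _)%E) ?adde_ge0 //= lnEM ?f0 ?g0 //.
exact: abse_le_abse_add (lnE_neq_pinfty _) (lnE_neq_pinfty _).
Qed.

Lemma Ggeo_mul_eq0 {f g} : nonneg_on_Lam f -> nonneg_on_Lam g ->
  measurable_fun Lam f -> 0 < Ggeo g -> Ggeo f = 0 -> Ggeo (f \* g) = 0.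
Proof.
move=> f0 g0 mf Gg /Ggeo_eq0 nf; apply/Ggeo_eq0 => ifg; apply: nf.
exact: log_integrable_divr f0 g0 mf (log_integrable_Ggeo_gt0 Gg) ifg.
Qed.

Lemma classM_mul {f g1 g2} : classM f g1 -> classM (f \* g1) g2 ->
  classM f (g1 \* g2).
Proof.
move=> [g10 G1 _ r1] [g20 G2 ifg r2].
have [_ G12] := log_integrableM g10 g20 (log_integrable_Ggeo_gt0 G1)
  (log_integrable_Ggeo_gt0 G2).
have assoc : f \* (g1 \* g2) = (f \* g1) \* g2.
  by apply/funext => x /=; rewrite mulrA.
split; first exact: nonneg_on_LamM.
- by rewrite G12 mulr_gt0.
- by rewrite assoc.
- by rewrite assoc G12 mulrC; exact: cvg_ratio_trans (lt0r_neq0 G1) r1 r2.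
Qed.

Lemma spectral_density_mul {f g} : nonneg_on_Lam f -> classM f g ->
  spectral_density (f \* g).
Proof.
move=> f0 [g0 Gg ifg r]; split => //; first exact: nonneg_on_LamM.
rewrite lt0e measure_ge0 andbT; apply/eqP => null.
have vanish : (fun n => sigma2 n (f \* g) / sigma2 n f) = cst 0.
  apply/funext => n.
  by rewrite (sigma2_eq0 _ (nonneg_on_LamM f0 g0) (measurable_of_integrable ifg) null) mul0r.
rewrite vanish in r.
have : \forall n \near \oo, cst (0 : R) n != 0 by exact: cvgr_neq0 r (lt0r_neq0 Gg).
by case/filter_ex => n; rewrite eqxx.
Qed.

Lemma classF_mul {f g} : classF f -> classM f g -> classF (f \* g).
Proof.
move=> [[f0 fi _] Gf rf] Mfg; have [g0 Gg _ r] := Mfg.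
split; first exact: spectral_density_mul.
  exact: Ggeo_mul_eq0 f0 g0 (measurable_of_integrable fi) Gg Gf.
apply: (cvg_sigma_ratio (nonneg_on_LamM f0 g0)).
have rS : (fun n => sigma2 n.+1 (f \* g) / sigma2 n.+1 f) @ \oo --> Ggeo g.
  by rewrite (cvg_shiftS (fun n => sigma2 n (f \* g) / sigma2 n f)).
have := cvg_ratio_div (lt0r_neq0 Gg)
  (cvg_ratio_trans (oner_neq0 _) (cvg_sigma2_ratio f0 rf) rS) r.
by rewrite mulr1 divff ?lt0r_neq0.
Qed.

End spectral.

Theorem mainTheorem9 (R : realType) :
  (forall (f g1 g2 : R -> R),
      classF f -> classM f g1 -> classM (f \* g1) g2 ->
      classM f (g1 \* g2) /\ classF (f \* (g1 \* g2)))
  /\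
  (forall (f g : R -> R),
      classF f -> classM f g -> classM (f \* g) g ->
      classM f (g \* g)).
Proof.
have part1 (f g1 g2 : R -> R) : classF f -> classM f g1 -> classM (f \* g1) g2 ->
    classM f (g1 \* g2) /\ classF (f \* (g1 \* g2)).
  move=> Ff Mfg1 Mfg2; have Mf12 := classM_mul Mfg1 Mfg2.
  by split => //; exact: classF_mul Ff Mf12.
split; first exact: part1.
by move=> f g Ff Mfg Mfgg; case: (part1 f g g Ff Mfg Mfgg).
Qed.
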